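(* Let $L$ be a powerful Lie ring of cardinality $p^{n}$. Then $L^{n+1}=0$.
   Context: A finite Lie ring $L$ of $p$-power order is powerful if $p>2$ and $L^{2}\le pL$, or $p=2$ and $L^{2}\le 4L$. The lower central series is $L^{1}=L$, $L^{k+1}=[L,L^{k}]$ (additive span of brackets). *)

From HB Require Import structures.
From mathcomp Require Import all_boot all_order all_algebra.
Set Implicit Arguments. Unset Strict Implicit. Unset Printing Implicit Defensive.
Import GRing.Theory.
Local Open Scope ring_scope.

Definition lie_ring_axioms (L : zmodType) (br : L -> L -> L) : Prop :=
  [/\ (forall x y z, br (x + y) z = br x z + br y z),
      (forall x y z, br x (y + z) = br x y + br x z),
      (forall x, br x x = 0) &
      (forall x y z, br x (br y z) + br y (br z x) + br z (br x y) = 0)].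

Definition is_addsubgroup (L : finZmodType) (A : {set L}) : bool :=
  [&& 0 \in A & [forall x in A, forall y in A, x - y \in A]].

Definition addspan (L : finZmodType) (S : {set L}) : {set L} :=
  [set x | [forall A : {set L}, (S \subset A) && is_addsubgroup A ==> (x \in A)]].

Definition lie_bracket_set (L : finZmodType) (br : L -> L -> L)
  (A B : {set L}) : {set L} :=
  addspan [set br a b | a in A, b in B].

(* Lower central series: lcs br 1 = L, lcs br (k+1) = [L, lcs br k].
   (lcs br 0 is also set to L; it is not used.) *)
Fixpoint lcs (L : finZmodType) (br : L -> L -> L) (k : nat) : {set L} :=
  match k with
  | 0 | 1 => [set: L]
  | k'.+1 => lie_bracket_set br [set: L] (lcs br k')
  end.

Definition mult_set (L : finZmodType) (m : nat) : {set L} :=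
  [set x *+ m | x in [set: L]].

Definition powerful (L : finZmodType) (br : L -> L -> L) (p : nat) : Prop :=
  ((2 < p)%N /\ lcs br 2 \subset mult_set L p) \/
  (p = 2 /\ lcs br 2 \subset mult_set L 4).

From mathcomp Require Import all_boot all_order all_algebra all_fingroup.
From mathcomp Require Import cyclic.
Import GRing.Theory.
Local Open Scope ring_scope.

(* If [L, L] <= pL, additivity of the bracket in its second argument gives
   [L, p^k L] = p^k [L, L] <= p^(k+1) L, so by induction L^(k+1) <= p^k L.
   For k = n this is p^n L = |L| L = 0 by Lagrange. *)

Section AdditiveSpan.
Variable L : finZmodType.

Lemma addspan_min (S A : {set L}) :
  S \subset A -> is_addsubgroup A -> addspan S \subset A.
Proof.
move=> sSA subA; apply/subsetP=> x; rewrite inE => /forallP /(_ A).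
by rewrite sSA subA => /implyP; apply.
Qed.

Lemma sub_addspan (S : {set L}) : S \subset addspan S.
Proof.
apply/subsetP=> x Sx; rewrite inE; apply/forallP=> A; apply/implyP.
by case/andP=> /subsetP sSA _; apply: sSA.
Qed.

Lemma mem0_addspan (S : {set L}) : 0 \in addspan S.
Proof. by rewrite inE; apply/forallP=> A; apply/implyP=> /and3P[]. Qed.

Lemma mult_setP (m : nat) (x : L) :
  reflect (exists y, x = y *+ m) (x \in mult_set L m).
Proof.
by apply: (iffP imsetP) => [[y _ ->]|[y ->]]; exists y; rewrite ?inE.
Qed.

Lemma is_addsubgroup_mult_set (m : nat) : is_addsubgroup (mult_set L m).
Proof.
apply/andP; split; first by apply/mult_setP; exists 0; rewrite mul0rn.
apply/forallP=> x; apply/implyP=> /mult_setP[a ->].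
apply/forallP=> y; apply/implyP=> /mult_setP[b ->].
by apply/mult_setP; exists (a - b); rewrite mulrnBl.
Qed.

Lemma mult_setS (m k : nat) : (m %| k)%N -> mult_set L k \subset mult_set L m.
Proof.
case/dvdnP=> q ->; apply/subsetP=> _ /mult_setP[y ->].
by apply/mult_setP; exists (y *+ q); rewrite -mulrnA mulnC.
Qed.

Lemma mulrn_card (x : L) : x *+ #|L| = 0.
Proof. by rewrite -FinRing.zmodXgE -cardsT expg_cardG ?inE. Qed.

End AdditiveSpan.

Section LowerCentralSeries.
Variables (L : finZmodType) (br : L -> L -> L).

Lemma mem0_lcs (k : nat) : 0 \in lcs br k.
Proof. by case: k => [|[|k]]; [rewrite inE | rewrite inE | apply: mem0_addspan]. Qed.

Lemma mem_lcs2 (a b : L) : br a b \in lcs br 2.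
Proof. by apply/(subsetP (@sub_addspan L _))/imset2P; exists a b. Qed.

Lemma powerful_lcs2 (p : nat) :
  powerful br p -> lcs br 2 \subset mult_set L p.
Proof.
case=> [[_ //]|[-> sL2]]; apply: subset_trans sL2 _.
exact: mult_setS.
Qed.

Hypothesis brDr : forall x y z, br x (y + z) = br x y + br x z.

Lemma brMnr (x y : L) (m : nat) : br x (y *+ m) = br x y *+ m.
Proof.
have br_x0 : br x 0 = 0 by apply: (addrI (br x 0)); rewrite -brDr !addr0.
by elim: m => [|m IHm]; rewrite ?mulr0n // !mulrS brDr IHm.
Qed.

Lemma lcs_sub_mult_set (m k : nat) :
  lcs br 2 \subset mult_set L m -> lcs br k.+1 \subset mult_set L (m ^ k).
Proof.
move=> sL2; elim: k => [|k IHk]; first by apply/subsetP=> x _; apply/mult_setP; exists x.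
case: k IHk => [|k] IHk; first by rewrite expn1.
apply: addspan_min; last exact: is_addsubgroup_mult_set.
apply/subsetP=> _ /imset2P[a _ _ /(subsetP IHk) /mult_setP[y ->] ->].
rewrite brMnr.
have /(subsetP sL2) /mult_setP[w ->] := mem_lcs2 a y.
by apply/mult_setP; exists w; rewrite -mulrnA -expnS.
Qed.

End LowerCentralSeries.

Theorem lemma2p3 (L : finZmodType) (br : L -> L -> L) (p n : nat) :
  lie_ring_axioms br -> prime p -> #|L| = (p ^ n)%N ->
  powerful br p ->
  lcs br n.+1 = [set 0 : L].
Proof.
move=> [_ brDr _ _] _ cardL /powerful_lcs2 sL2.
apply/eqP; rewrite eqEsubset sub1set mem0_lcs andbT.
apply/subsetP=> _ /(subsetP (lcs_sub_mult_set L br brDr p n sL2)) /mult_setP[y ->].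
by rewrite -cardL mulrn_card inE.
Qed.
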